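(* For a large discrete power-law random network with $N$ nodes, exponent $\alpha$ and maximal degree $K$, the fraction of links removed at the threshold $p_c$ for random node failures is $$m(p_c) = 1 - \left(\frac{H_K^{(\alpha-1)}}{H_K^{(\alpha-2)} - H_K^{(\alpha-1)}}\right)^2,\qquad\text{where } H_K^{(s)} = \sum_{k=1}^{K} k^{-s}.$$
   Context: A random network with degree distribution $p_k$ is a configuration model: each of the $N$ nodes receives a degree drawn from $p_k$, giving that many stubs, and stubs are paired uniformly at random. A discrete power-law network with exponent $\alpha$ has $p_k\propto k^{-\alpha}$ for integers $k\ge1$; a network with $N$ nodes has finite maximal degree $K$ (a cutoff depending on $N$), and moments are computed over $1\le k\le K$. Random node failures remove a uniformly random fraction $p$ of the nodes with their incident links; $m(p)$ is the resulting fraction of removed links ($m(p)=2p-p^2$ in the large-network limit). The threshold $p_c$ is the fraction of removed nodes at which the giant component disappears; the paper uses the known formula $p_c = 1-\langle k\rangle/(\langle k^2\rangle-\langle k\rangle)$. *)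

From mathcomp Require Import all_boot all_order all_algebra.
From mathcomp Require Import all_classical all_reals all_analysis.
Set Implicit Arguments. Unset Strict Implicit. Unset Printing Implicit Defensive.
Import Order.TTheory GRing.Theory Num.Theory.
Local Open Scope ring_scope.

Definition harm (R : realType) (K : nat) (s : R) : R :=
  \sum_(1 <= k < K.+1) (k%:R `^ (- s)).

Definition plaw (R : realType) (alpha : R) (K k : nat) : R :=
  (k%:R `^ (- alpha)) / harm K alpha.

Definition moment (R : realType) (n : nat) (alpha : R) (K : nat) : R :=
  \sum_(1 <= k < K.+1) (k%:R ^+ n * plaw alpha K k).

Definition pc (R : realType) (alpha : R) (K : nat) : R :=
  1 - moment 1 alpha K / (moment 2 alpha K - moment 1 alpha K).

(* Fraction of removed links when a fraction p of nodes is removed. *)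
Definition mlinks (R : realType) (p : R) : R := 2 * p - p ^+ 2.

(* Writing the moments as [<k^n> = H_K^(alpha-n) / H_K^(alpha)], the normalisation cancels in
   [<k>/(<k^2> - <k>)], so [p_c = 1 - q] with [q] the ratio of harmonic numbers in the statement;
   then [m(1 - q) = 1 - q^2]. *)
From mathcomp Require Import all_boot all_order all_algebra.
From mathcomp Require Import all_classical all_reals all_analysis.
From mathcomp Require Import ring.

Import Order.TTheory GRing.Theory Num.Theory.
Local Open Scope ring_scope.

Lemma mlinks_1B (R : realType) (q : R) : mlinks (1 - q) = 1 - q ^+ 2.
Proof. rewrite /mlinks; ring. Qed.

Lemma harm_gt0 (R : realType) (K : nat) (s : R) : (1 <= K)%N -> 0 < harm K s.
Proof.
move=> hK; rewrite /harm big_ltn ?ltnS //.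
apply: ltr_wpDr; last by apply: powR_gt0; rewrite ltr0n.
by apply: sumr_ge0 => i _; exact: powR_ge0.
Qed.

Lemma moment_harm (R : realType) (n : nat) (alpha : R) (K : nat) :
  moment n alpha K = harm K (alpha - n%:R) / harm K alpha.
Proof.
rewrite /moment /plaw /harm mulr_suml; apply: eq_big_nat => k /andP[k_gt0 _].
rewrite mulrA; congr (_ * _).
rewrite -powR_mulrn ?ler0n // -powRD; last by rewrite pnatr_eq0 -lt0n k_gt0 implybT.
by rewrite opprB addrC.
Qed.

Lemma pc_harm (R : realType) (alpha : R) (K : nat) : (1 <= K)%N ->
  pc alpha K = 1 - harm K (alpha - 1) / (harm K (alpha - 2) - harm K (alpha - 1)).
Proof.
move=> hK; rewrite /pc !moment_harm -mulrBl invfM invrK.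
have harm_neq0 : harm K alpha != 0 by rewrite gt_eqF // harm_gt0.
by rewrite mulrA mulrAC -(mulrA _ _ (harm K alpha)) mulVf ?mulr1.
Qed.

Theorem mainTheorem8 (R : realType) (alpha : R) (K : nat) (hK : (1 <= K)%N) :
  mlinks (pc alpha K) =
  1 - (harm K (alpha - 1) / (harm K (alpha - 2) - harm K (alpha - 1))) ^+ 2.
Proof. by rewrite pc_harm // mlinks_1B. Qed.
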